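(* For every $m\ge 0$, $p_m(x)=p_0(x)\,q_m(x)$. Moreover $p_m$ is the characteristic polynomial of $J_m$, so $\mathrm{Spec}(J_m)$ consists of $\mathrm{Spec}(J_0)$ together with the zeros of $q_m$.
   Context: Let $k\ge 2$, $a_0,\dots,a_{k-1}\in\mathbb{R}$, $a_0\ne0$. Define $b_{0,j}=a_j$ ($0\le j\le k-1$) and for $m\ge0$: $b_{m+1,j}=a_jb_{m,0}+b_{m,j+1}$ ($0\le j\le k-2$), $b_{m+1,k-1}=a_{k-1}b_{m,0}$. These are the coefficients of the $m$-times expanded linear equation $z_{n+1}=\sum_{j=0}^{k-1}b_{m,j}z_{n-m-j}$ of $x_{n+1}=\sum_{j=0}^{k-1}a_jx_{n-j}$. Define the polynomials $$p_m(x)=x^{k+m}-\sum_{j=0}^{k-1}b_{m,j}x^{k-j-1},\qquad q_m(x)=x^m+\sum_{i=0}^{m-1}b_{i,0}x^{m-i-1},$$ with $q_0\equiv1$. $J_m$ is the $(m+k)\times(m+k)$ matrix whose first row is $(0,\dots,0,b_{m,0},b_{m,1},\dots,b_{m,k-1})$ (with $m$ leading zeros), with ones at positions $(i+1,i)$ for $i=1,\dots,m+k-1$ and zeros elsewhere (the Jacobian of the $m$-th expanded equation). *)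

From HB Require Import structures.
From mathcomp Require Import all_boot all_order all_algebra.
From mathcomp Require Import complex.
Set Implicit Arguments. Unset Strict Implicit. Unset Printing Implicit Defensive.
Import Order.TTheory GRing.Theory Num.Theory.
Local Open Scope ring_scope.

(* Coefficients a_0..a_{k-1} are given as a : nat -> R; only the values
   a j with j < k are ever used. b k a m j = b_{m,j} for j < k, and 0 for j >= k. *)
Fixpoint bcoef (R : nzRingType) (k : nat) (a : nat -> R) (m j : nat) : R :=
  match m with
  | 0 => if (j < k)%N then a j else 0
  | m'.+1 => if (j < k)%N then a j * bcoef k a m' 0 + bcoef k a m' j.+1 else 0
  end.

Definition pm (R : nzRingType) (k : nat) (a : nat -> R) (m : nat) : {poly R} :=
  'X^(k + m) - \sum_(j < k) bcoef k a m j *: 'X^(k - j - 1).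

Definition qm (R : nzRingType) (k : nat) (a : nat -> R) (m : nat) : {poly R} :=
  'X^m + \sum_(i < m) bcoef k a i 0 *: 'X^(m - i - 1).

Definition Jm (R : nzRingType) (k : nat) (a : nat -> R) (m : nat) : 'M[R]_(m + k) :=
  \matrix_(i < m + k, j < m + k)
    if (i == 0%N :> nat) then (if (m <= j)%N then bcoef k a m (j - m) else 0)
    else (if (i == j.+1 :> nat) then 1 else 0).

From HB Require Import structures.
From mathcomp Require Import all_boot all_order all_algebra.
From mathcomp Require Import complex.
From mathcomp Require Import zify ring.
Set Implicit Arguments. Unset Strict Implicit. Unset Printing Implicit Defensive.
Import Order.TTheory GRing.Theory Num.Theory.
Local Open Scope ring_scope.

(* J_m is a companion matrix, so expanding det(X - J_m) along its last column
   gives p_m.  The expansion rule b_{m+1,j} = a_j b_{m,0} + b_{m,j+1} becomes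
   p_{m+1} = X p_m + b_{m,0} p_0, while q_{m+1} = X q_m + b_{m,0}; both sides
   of p_m = p_0 q_m therefore satisfy the same recurrence. *)

Section Companion.
Variable R : comNzRingType.
Implicit Types c : nat -> R.

Definition companion_mx c n : 'M[R]_n :=
  \matrix_(i < n, j < n)
    if (i == 0%N :> nat) then c (j : nat)
    else (if (i == j.+1 :> nat) then 1 else 0).

Lemma companion_mx_minor_max c n :
  row' ord_max (col' ord_max (companion_mx c n.+1)) = companion_mx c n.
Proof. by apply/matrixP => i j; rewrite !mxE !lift_max. Qed.

Lemma cofactor_char_companion_max c n :
  cofactor (char_poly_mx (companion_mx c n.+1)) ord_max ord_max
  = char_poly (companion_mx c n).
Proof.
by rewrite /cofactor row'_col'_char_poly_mx companion_mx_minor_max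
  -signr_odd oddD addbb mul1r.
Qed.

(* The minor is lower triangular with [-1] on its diagonal (the subdiagonal
   ones of the companion matrix), so both signs cancel. *)
Lemma cofactor_char_companion_corner c n :
  cofactor (char_poly_mx (companion_mx c n.+2)) ord0 ord_max = 1.
Proof.
rewrite /cofactor -det_tr det_trig; last first.
  apply/is_trig_mxP => i j lt_ij; rewrite !mxE -val_eqE /= /bump /=.
  by rewrite leqNgt ltn_ord add0n add1n !gtn_eqF ?subrr // ltnS ltnW.
rewrite (eq_bigr (fun _ => -1)); last first.
  move=> i _; rewrite !mxE -val_eqE /= /bump /= leqNgt ltn_ord add0n add1n.
  by rewrite eqxx gtn_eqF // mulr0n sub0r.
by rewrite prodr_const card_ord add0n -exprD addnn -signr_odd odd_double.
Qed.

Lemma char_poly_companionS c n :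
  char_poly (companion_mx c n.+1) = 'X * char_poly (companion_mx c n) - (c n)%:P.
Proof.
rewrite /char_poly (expand_det_col _ ord_max).
case: n => [|n].
  rewrite big_ord1; have -> : ord0 = ord_max :> 'I_1 by apply/val_inj.
  rewrite cofactor_char_companion_max.
  by rewrite !mxE /char_poly det_mx00 !mulr1.
rewrite big_ord_recl big_ord_recr /= big1 => [|i _]; last first.
  have lt_in := ltn_ord i.
  rewrite !mxE -val_eqE /= /bump /= !add1n !eqSS (ltn_eqF lt_in).
  by rewrite ltn_eqF ?subrr ?mul0r // ltnW.
have -> : lift ord0 (ord_max : 'I_n.+1) = ord_max :> 'I_n.+2 by apply/val_inj.
rewrite cofactor_char_companion_max cofactor_char_companion_corner !mxE /=.
by rewrite eqxx ltn_eqF // mulr0n mulr1n sub0r subr0 mulr1 add0r addrC.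
Qed.

Lemma char_poly_companion c n :
  char_poly (companion_mx c n) = 'X^n - \sum_(j < n) c j *: 'X^(n - 1 - j).
Proof.
elim: n => [|n IH]; first by rewrite /char_poly det_mx00 big_ord0 subr0.
rewrite char_poly_companionS IH big_ord_recr /= mulrBr -exprS mulr_sumr opprD addrA.
rewrite subSS subn0 subnn expr0 alg_polyC; congr (_ - _ - _).
apply: eq_bigr => j _; rewrite -scalerAr -exprS; congr (_ *: 'X^_).
by have := ltn_ord j; lia.
Qed.

End Companion.

Lemma bcoef_ge (R : nzRingType) k (a : nat -> R) m j :
  (k <= j)%N -> bcoef k a m j = 0.
Proof. by case: m => [|m] /=; rewrite leqNgt => /negbTE ->. Qed.

Lemma bcoef0 (R : nzRingType) k (a : nat -> R) j :
  (j < k)%N -> bcoef k a 0 j = a j.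
Proof. by move=> /= ->. Qed.

Lemma bcoefS (R : nzRingType) k (a : nat -> R) m j : (j < k)%N ->
  bcoef k a m.+1 j = a j * bcoef k a m 0 + bcoef k a m j.+1.
Proof. by move=> /= ->. Qed.

Section ExpandedRecurrence.
Variables (R : comNzRingType) (k : nat) (a : nat -> R).

Lemma Jm_companion m :
  Jm k a m =
  companion_mx (fun j => if (m <= j)%N then bcoef k a m (j - m) else 0) (m + k).
Proof. by apply/matrixP => i j; rewrite !mxE. Qed.

Lemma char_poly_Jm m : char_poly (Jm k a m) = pm k a m.
Proof.
rewrite Jm_companion char_poly_companion /pm big_split_ord /=.
rewrite big1 => [|i _]; last by rewrite leqNgt ltn_ord scale0r.
rewrite add0r addnC; congr (_ - _); apply: eq_bigr => i _ /=.
rewrite leq_addr addKn; congr (_ *: 'X^_).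
by have := ltn_ord i; lia.
Qed.

Lemma qmS m : qm k a m.+1 = 'X * qm k a m + (bcoef k a m 0)%:P.
Proof.
rewrite /qm big_ord_recr /= subSn // subnn subnn expr0 alg_polyC.
rewrite mulrDr -exprS addrA.
congr (_ + _ + _); rewrite mulr_sumr; apply: eq_bigr => i _.
rewrite -scalerAr -exprS; congr (_ *: 'X^_).
by have := ltn_ord i; lia.
Qed.

Hypothesis k_gt0 : (0 < k)%N.

Lemma mulX_bcoef_sum m :
  'X * \sum_(j < k) bcoef k a m j *: 'X^(k - j - 1) =
  bcoef k a m 0 *: 'X^k + \sum_(j < k) bcoef k a m j.+1 *: 'X^(k - j - 1).
Proof.
case: k k_gt0 => [//|k'] _.
rewrite mulr_sumr big_ord_recl big_ord_recr /= [bcoef _ _ _ k'.+1]bcoef_ge //.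
rewrite scale0r addr0.
rewrite subn0 subn1 -scalerAr -exprS; congr (_ + _); apply: eq_bigr => j _.
rewrite -scalerAr -exprS; congr (_ *: 'X^_).
by have := ltn_ord j; rewrite /bump /=; lia.
Qed.

Lemma bcoefS_sum m :
  \sum_(j < k) bcoef k a m.+1 j *: 'X^(k - j - 1) =
  bcoef k a m 0 *: \sum_(j < k) bcoef k a 0 j *: 'X^(k - j - 1) +
  \sum_(j < k) bcoef k a m j.+1 *: 'X^(k - j - 1).
Proof.
rewrite scaler_sumr -big_split; apply: eq_bigr => j _.
by rewrite bcoefS // bcoef0 // scalerA scalerDl mulrC.
Qed.

Lemma pmS m : pm k a m.+1 = 'X * pm k a m + bcoef k a m 0 *: pm k a 0.
Proof.
rewrite /pm bcoefS_sum mulrBr mulX_bcoef_sum -exprS addn0 addnS scalerBr.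
by rewrite -!mul_polyC; ring.
Qed.

Lemma pm_factor m : pm k a m = pm k a 0 * qm k a m.
Proof.
elim: m => [|m IH]; first by rewrite /qm big_ord0 addr0 mulr1.
by rewrite pmS qmS IH -mul_polyC; ring.
Qed.

End ExpandedRecurrence.

Lemma eigenvalue_map_Jm (R : comNzRingType) (F : fieldType) (f : {rmorphism R -> F})
    k (a : nat -> R) m (z : F) :
  eigenvalue (map_mx f (Jm k a m)) z = root (map_poly f (pm k a m)) z.
Proof. by rewrite eigenvalue_root_char -map_char_poly char_poly_Jm. Qed.

Theorem mainTheorem5 (R : rcfType) (k : nat) (a : nat -> R) :
  (2 <= k)%N -> a 0%N != 0 ->
  forall m : nat,
    [/\ pm k a m = pm k a 0 * qm k a m,
        char_poly (Jm k a m) = pm k a m &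
        forall z : R[i],
          eigenvalue (map_mx (fun x : R => x%:C%C) (Jm k a m)) z <->
          eigenvalue (map_mx (fun x : R => x%:C%C) (Jm k a 0)) z
          \/ root (map_poly (fun x : R => x%:C%C) (qm k a m)) z].
Proof.
move=> k_ge2 _ m; have k_gt0 : (0 < k)%N by apply: leq_trans k_ge2.
split; [exact: pm_factor | exact: char_poly_Jm | move=> z].
have eigen_root n := @eigenvalue_map_Jm _ _ (real_complex R) k a n z.
by rewrite !eigen_root pm_factor // rmorphM rootM; split=> /orP.
Qed.
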